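(* Let $T$ be the Lr $(\mathbf a,\tau)$ interval exchange transformation and assume $T$ has no periodic points. Then: (i) if $x\ne y$ in $[0,1)$, the pair $\mathcal I(x),\mathcal I(y)$ is neither positively nor negatively asymptotic; (ii) if $x\ne y$ in $(0,1]$, the pair $\tilde{\mathcal I}(x),\tilde{\mathcal I}(y)$ is neither positively nor negatively asymptotic; (iii) if $\alpha\ne\beta$ are points of $X$ with $\alpha\in X_0$, the pair $\alpha,\beta$ is neither positively nor negatively asymptotic; (iv) the maps $\mathcal I$ and $\tilde{\mathcal I}$ are injective.
   Context: Fix $n\ge 2$, $[n]=\{1,\dots,n\}$, a vector $\mathbf a=(a_1,\dots,a_n)$ with all $a_i>0$ and $\sum_i a_i=1$, and a permutation $\tau$ of $[n]$. Put $b_0=0$, $b_i=\sum_{j=1}^i a_j$, $J_i=[b_{i-1},b_i)$, $\tilde J_i=(b_{i-1},b_i]$ for $i\in[n]$, and $D=\{b_1,\dots,b_{n-1}\}$. Put $b^\tau_0=0$, $b^\tau_i=\sum_{j=1}^i a_{\tau^{-1}(j)}$. The Lr $(\mathbf a,\tau)$ interval exchange transformation $T:[0,1)\to[0,1)$ and its dual $\tilde T:(0,1]\to(0,1]$ are defined by $x\mapsto x-b_{i-1}+b^\tau_{\tau(i)-1}$ for $x\in J_i$ (resp. $x\in\tilde J_i$); both are bijections. Let $\Omega=[n]^{\mathbb Z}$ with the product topology and shift $S(\alpha)_i=\alpha_{i+1}$. The itinerary maps are $\mathcal I(x)_k=i\iff T^kx\in J_i$ ($x\in[0,1)$) and $\tilde{\mathcal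 I}(x)_k=i\iff\tilde T^kx\in\tilde J_i$ ($x\in(0,1]$), $k\in\mathbb Z$. Let $D_\infty=\{0,1\}\cup\bigcup_{k\in\mathbb Z}T^k(D)$, $R=[0,1]\setminus D_\infty$, $X_0=\mathcal I(R)$, $X=\overline{X_0}$. Points $\alpha,\beta\in\Omega$ are positively (resp. negatively) asymptotic if there is $N\in\mathbb N$ with $\alpha_i=\beta_i$ for all $i\ge N$ (resp. all $i\le -N$). A periodic point of $T$ is $x$ with $T^kx=x$ for some $k\in\mathbb N$. *)

From HB Require Import structures.
From mathcomp Require Import all_boot all_order all_algebra all_fingroup.
From mathcomp Require Import reals.
Set Implicit Arguments. Unset Strict Implicit. Unset Printing Implicit Defensive.
Import Order.TTheory GRing.Theory Num.Theory.
Local Open Scope ring_scope.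

(* Letters are 0-based: the paper's letter i in [n] is the ordinal i-1 : 'I_n. *)
Section IET.
Variables (R : realType) (n : nat) (a : 'I_n -> R) (tau : 'S_n).

(* lo i = b_{i-1} (paper, 1-based), hi i = b_i *)
Definition lo (i : 'I_n) : R := \sum_(j < n | (j < i)%N) a j.
Definition hi (i : 'I_n) : R := lo i + a i.
(* lot i = b^tau_{tau(i)-1} = sum of a_j over j with tau j < tau i *)
Definition lot (i : 'I_n) : R := \sum_(j < n | (tau j < tau i)%N) a j.
Definition hit (i : 'I_n) : R := lot i + a i.

Definition T (x : R) : R :=
  match [pick i : 'I_n | (lo i <= x) && (x < hi i)] with
  | Some i => x - lo i + lot i | None => x end.
Definition Tinv (y : R) : R :=
  match [pick i : 'I_n | (lot i <= y) && (y < hit i)] with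
  | Some i => y - lot i + lo i | None => y end.
Definition Td (x : R) : R :=
  match [pick i : 'I_n | (lo i < x) && (x <= hi i)] with
  | Some i => x - lo i + lot i | None => x end.
Definition Tdinv (y : R) : R :=
  match [pick i : 'I_n | (lot i < y) && (y <= hit i)] with
  | Some i => y - lot i + lo i | None => y end.

Definition zpow (f g : R -> R) (k : int) (x : R) : R :=
  match k with Posz m => iter m f x | Negz m => iter m.+1 g x end.
Definition Tk (k : int) (x : R) : R := zpow T Tinv k x.
Definition Tdk (k : int) (x : R) : R := zpow Td Tdinv k x.

(* itineraries; d is an irrelevant default letter (never used on the domains) *)
Definition itin (d : 'I_n) (x : R) : int -> 'I_n := fun k =>
  odflt d [pick i : 'I_n | (lo i <= Tk k x) && (Tk k x < hi i)].
Definition itind (d : 'I_n) (x : R) : int -> 'I_n := fun k =>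
  odflt d [pick i : 'I_n | (lo i < Tdk k x) && (Tdk k x <= hi i)].

Definition Dinf (x : R) : Prop :=
  x = 0 \/ x = 1 \/ exists (k : int) (i : 'I_n), (0 < i)%N /\ x = Tk k (lo i).
Definition Rgood (x : R) : Prop := (0 <= x <= 1) /\ ~ Dinf x.
Definition X0 (d : 'I_n) (al : int -> 'I_n) : Prop :=
  exists x, Rgood x /\ al = itin d x.
(* closure of X0 in the product topology of [n]^Z: every central cylinder
   around al meets X0 *)
Definition X (d : 'I_n) (al : int -> 'I_n) : Prop :=
  forall N : nat, exists x, Rgood x /\
    forall k : int, (absz k <= N)%N -> al k = itin d x k.

Definition no_periodic : Prop :=
  forall x : R, 0 <= x < 1 -> forall k : nat, (0 < k)%N -> iter k T x <> x.
End IET.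

Definition pos_asympt (n : nat) (al be : int -> 'I_n) : Prop :=
  exists N : nat, forall i : int, (N%:Z <= i)%R -> al i = be i.
Definition neg_asympt (n : nat) (al be : int -> 'I_n) : Prop :=
  exists N : nat, forall i : int, (i <= - N%:Z)%R -> al i = be i.

From Pilot Require Import Defs.
From HB Require Import structures.
From mathcomp Require Import all_boot all_order all_algebra all_fingroup.
From mathcomp Require Import reals lra.
From Stdlib Require Import Classical FunctionalExtensionality.
Set Implicit Arguments. Unset Strict Implicit. Unset Printing Implicit Defensive.
Import Order.TTheory GRing.Theory Num.Theory.
Local Open Scope ring_scope.

(* All four maps T, T^-1, T~, T~^-1 are exchanges [exch left rho sigma]
   carrying the intervals laid out in the order rho onto the layout sigma.
   Section PiecewiseTranslation studies an arbitrary piecewise translation of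
   [0,1] with convex pieces: two distinct points with the same itinerary move
   rigidly as a block, which by pigeonhole must drift periodically, yielding a
   periodic point (of any map agreeing with F off the endpoints); and if the
   itinerary of u determines u, a long common initial code pins a point near
   u.  Section Itineraries
   identifies the objects of Defs with exchanges, reads the past of a
   two-sided itinerary as the future under T^-1, and derives parts (i), (ii)
   and (iv) at once; part (iii) follows from local constancy of letters near
   points avoiding the orbit of the discontinuities. *)

Lemma exists_nat_gt (R : realType) (x e : R) : 0 < e -> exists m : nat, x < m%:R * e.
Proof.
move=> e0; have [x0|x0] := leP x 0; first by exists 1%N; rewrite mul1r; lra.
exists (Num.Def.archi_bound (x / e)).
rewrite -ltr_pdivrMr //; apply: archi_boundP.
by rewrite divr_ge0 // ltW.
Qed.

Lemma unit_seq_close (R : realType) (y : nat -> R) (e : R) :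
  (forall k, 0 <= y k <= 1) -> 0 < e ->
  exists j k, (j < k)%N /\ y j - e < y k < y j + e.
Proof.
move=> y01 e0; have [M hM] := exists_nat_gt 1 e0.
have M0 : 0 < M%:R :> R by rewrite ltr0n lt0n; apply: contraTneq hM => ->; lra.
pose bucket k := Num.Def.truncn (M%:R * y k).
have My0 k : 0 <= M%:R * y k by rewrite mulr_ge0 ?ler0n //; case/andP: (y01 k).
have bucketP k : (bucket k < M.+1)%N.
  rewrite truncn_lt_nat // -natr1.
  have : M%:R * y k <= M%:R * 1 by rewrite ler_wpM2l ?ler0n //; case/andP: (y01 k).
  lra.
have close j k : bucket j = bucket k -> y j - e < y k < y j + e.
  rewrite /bucket => ejk.
  have := truncn_itv (My0 j); have := truncn_itv (My0 k).
  rewrite ejk -natr1 => /andP[lk hk] /andP[lj hj].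
  have lt1 : y k - y j < e by rewrite -(ltr_pM2l M0) mulrBr; lra.
  have gt1 : y j - y k < e by rewrite -(ltr_pM2l M0) mulrBr; lra.
  by apply/andP; split; lra.
pose f (k : 'I_M.+2) : 'I_M.+1 := Ordinal (bucketP k).
have /injectivePn [j [k jk /(congr1 val) /= ejk]] : ~~ injectiveb f.
  by apply/injectiveP => /leq_card; rewrite !card_ord ltnn.
have [ltjk|ltkj] := ltnP j k.
- by exists j, k; split => //; apply: close.
- exists k, j; split; first by rewrite ltn_neqAle eq_sym jk.
  by apply: close.
Qed.

Section PiecewiseTranslation.
Variables (R : realType) (I : finType) (F : R -> R) (P : I -> R -> bool) (c : I -> R).
Hypothesis P_convex : forall i p q r, P i p -> P i q -> p <= r <= q -> P i r.
Hypothesis F_transl : forall i z, P i z -> F z = z + c i.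

Definition same_code (K : nat) (u v : R) : Prop :=
  forall m, (m <= K)%N -> exists i, P i (iter m F u) && P i (iter m F v).

Definition same_itin (u v : R) : Prop := forall K, same_code K u v.

Lemma same_code_sym K u v : same_code K u v -> same_code K v u.
Proof. by move=> h m /h [i /andP[hu hv]]; exists i; rewrite hu hv. Qed.

Lemma same_itin_sym u v : same_itin u v -> same_itin v u.
Proof. by move=> h K; apply: same_code_sym. Qed.

Lemma same_code_le K K' u v : (K' <= K)%N -> same_code K u v -> same_code K' u v.
Proof. by move=> hK h m hm; apply: h; apply: leq_trans hK. Qed.

Lemma same_code_transl K u v : u <= v -> same_code K u v ->
  forall m, (m <= K.+1)%N -> forall z, u <= z <= v ->
  iter m F z = z + (iter m F u - u).
Proof.
move=> uv hs; elim=> [|m IH] hm z hz /=; first lra.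
have [i /andP[hu hv]] := hs m hm.
have hz' := IH (ltnW hm) z hz.
have hv' := IH (ltnW hm) v (ltac:(by rewrite uv lexx)).
have hPz : P i (iter m F z).
  by apply: P_convex hu hv _; rewrite hz' hv'; apply/andP; lra.
rewrite (F_transl hPz) (F_transl hu) hz'; lra.
Qed.

Lemma same_itin_transl u v : u <= v -> same_itin u v ->
  forall m z, u <= z <= v -> iter m F z = z + (iter m F u - u).
Proof. by move=> uv hs m; apply: (same_code_transl uv (hs m)). Qed.

Lemma same_code_sub K u v p q : same_code K u v ->
  u <= p <= v -> u <= q <= v -> same_code K p q.
Proof.
move=> hs hp hq m hm.
have uv : u <= v by lra.
have [i /andP[hu hv]] := hs m hm.
have tr z : u <= z <= v -> iter m F z = z + (iter m F u - u).
  by apply: (same_code_transl uv hs); apply: leqW.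
have tv : iter m F v = v + (iter m F u - u) by apply: tr; lra.
exists i; apply/andP; split; apply: P_convex hu hv _; rewrite ?(tr p) ?(tr q) // tv; lra.
Qed.

(* If the blocks [F^j u, F^j v] and [F^(p+j) u, F^(p+j) v] overlap, then
   the displacement s accumulated over p steps is repeated forever. *)
Lemma same_itin_drift u v j p : u < v -> same_itin u v ->
  let s := iter (p + j) F u - iter j F u in
  - (v - u) < s < v - u ->
  forall m, iter (m * p + j) F u = iter j F u + m%:R * s.
Proof.
move=> uv hs s hs_small.
have uv' : u <= v by lra.
have tr := same_itin_transl uv' hs.
pose z0 := if 0 <= s then u else v.
have hz0 : u <= z0 <= v by rewrite /z0; case: (leP 0 s) => s0; lra.
have hz0s : u <= z0 + s <= v by rewrite /z0; case: (leP 0 s) => s0; lra.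
have shift : iter (p + j) F z0 = iter j F (z0 + s).
  by rewrite (tr _ _ hz0) (tr _ _ hz0s) /s; lra.
elim=> [|m IH]; first by rewrite mul0n add0n mul0r addr0.
have e1 := tr (m.+1 * p + j)%N z0 hz0.
have e2 : iter (m.+1 * p + j) F z0 = iter (m * p + j) F (z0 + s).
  by rewrite mulSn [(p + _)%N]addnC -addnA iterD shift -iterD.
rewrite e2 (tr _ _ hz0s) IH in e1; rewrite -natr1; lra.
Qed.

Hypothesis P_unit : forall i z, P i z -> 0 <= z <= 1.

(* Two distinct points with the same itinerary have eventually periodic
   orbits: a pigeonhole argument in [0,1] followed by the drift lemma. *)
Lemma same_itin_eventually_periodic u v : u < v -> same_itin u v ->
  exists j p, (0 < p)%N /\ iter (p + j) F u = iter j F u.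
Proof.
move=> uv hs.
have y01 k : 0 <= iter k F u <= 1.
  by have [i /andP[hu _]] := hs k k (leqnn k); apply: P_unit hu.
have [j [k [jk /andP[hk1 hk2]]]] := unit_seq_close y01 (ltac:(lra) : 0 < v - u).
exists j, (k - j)%N; split; first by rewrite subn_gt0.
have ekj : (k - j + j)%N = k by rewrite subnK // ltnW.
have drift := same_itin_drift uv hs (p := (k - j)%N) (j := j).
rewrite ekj in drift; have {}drift := drift (ltac:(apply/andP; lra)).
rewrite ekj; set s := iter k F u - iter j F u in drift *.
have [s0|s0|s0] := ltrgtP s 0; last by rewrite /s in s0; lra.
- have [m hm] := exists_nat_gt 1 (ltac:(lra) : 0 < - s).
  have := y01 (m * (k - j) + j)%N; rewrite drift; have := y01 j; lra.
- have [m hm] := exists_nat_gt 1 s0.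
  have := y01 (m * (k - j) + j)%N; rewrite drift; have := y01 j; lra.
Qed.

Lemma same_itin_interior_periodic (G : R -> R) u v :
  (forall i p q r, P i p -> P i q -> p < r < q -> G r = F r) ->
  u < v -> same_itin u v ->
  exists y p, [/\ (0 < p)%N, iter p G y = y & exists j, iter j F u < y < iter j F v].
Proof.
move=> GF uv hs.
have [j [p [p0 per]]] := same_itin_eventually_periodic uv hs.
have uv' : u <= v by lra.
have tr := same_itin_transl uv' hs.
pose z := (u + v) / 2.
have hz : u <= z <= v by rewrite /z; apply/andP; lra.
have Gorbit m : iter m G (iter j F z) = iter (m + j) F z.
  elim: m => // m IH; rewrite iterS IH.
  have [i /andP[hu hv]] := hs _ _ (leqnn (m + j)%N).
  apply: GF hu hv _; rewrite (tr _ z hz) (tr _ v); last lra.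
  by rewrite /z; apply/andP; lra.
exists (iter j F z), p; split=> //.
  by rewrite Gorbit !(tr _ z hz) per.
exists j; rewrite (tr _ z hz) (tr j v); last lra.
by rewrite /z; apply/andP; lra.
Qed.

Lemma interior_orbit_transl u :
  (forall m, exists i d, 0 < d /\
     forall r, iter m F u - d < r < iter m F u + d -> P i r) ->
  forall m, exists d, 0 < d /\
     forall w, u - d < w < u + d -> iter m F w = iter m F u + (w - u).
Proof.
move=> interior; elim=> [|m [d [d0 IH]]]; first by exists 1; split=> // w _ /=; lra.
have [i [d' [d'0 hi]]] := interior m.
exists (Num.min d d'); split; first by rewrite lt_min d0 d'0.
have [m1 m2] : Num.min d d' <= d /\ Num.min d d' <= d' by rewrite !ge_min !lexx orbT.
move=> w hw; have e1 : iter m F w = iter m F u + (w - u) by apply: IH; lra.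
have hPu : P i (iter m F u) by apply: hi; lra.
have hPw : P i (iter m F w) by apply: hi; rewrite e1; lra.
by rewrite /= (F_transl hPw) (F_transl hPu) e1; lra.
Qed.

Lemma same_code_shrink u e : 0 < e ->
  (forall w, w <> u -> same_itin w u -> False) ->
  exists K, forall w, same_code K w u -> u - e < w < u + e.
Proof.
move=> e0 lonely.
have [K1 nR] : exists K, ~ same_code K u (u + e).
  apply: NNPP => /(not_ex_not_all _ _) hR.
  by apply: (lonely (u + e)); [lra | move=> K; apply: same_code_sym].
have [K2 nL] : exists K, ~ same_code K (u - e) u.
  apply: NNPP => /(not_ex_not_all _ _) hL.
  by apply: (lonely (u - e)); [lra | exact: hL].
exists (maxn K1 K2) => w hw.
have [hwR|hwR] := leP (u + e) w.
  case: nR; apply: (same_code_le (leq_maxl K1 K2)).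
  by apply: (same_code_sub (same_code_sym hw)); lra.
have [hwL|hwL] := leP w (u - e).
  case: nL; apply: (same_code_le (leq_maxr K1 K2)).
  by apply: (same_code_sub hw); lra.
lra.
Qed.

End PiecewiseTranslation.

Section Pieces.
Variable R : realType.

(* s is before z: weakly for left-closed pieces [l, l + len), strictly for
   right-closed pieces (l, l + len]. *)
Definition before (left : bool) (s z : R) : bool := if left then s <= z else s < z.
Definition piece (left : bool) (l len z : R) : bool :=
  before left l z && ~~ before left (l + len) z.
Definition unit_dom (left : bool) (z : R) : bool := piece left 0 1 z.

Lemma pieceE left l len z : piece left l len z =
  if left then (l <= z) && (z < l + len) else (l < z) && (z <= l + len).
Proof. by case: left; rewrite /piece /before -?ltNge -?leNgt. Qed.

Lemma unit_domE left z :
  unit_dom left z = if left then (0 <= z < 1) else (0 < z <= 1).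
Proof. by rewrite /unit_dom pieceE add0r. Qed.

Lemma piece_convex left l len p q r :
  piece left l len p -> piece left l len q -> p <= r <= q -> piece left l len r.
Proof. by rewrite !pieceE; case: left => /andP[? ?] /andP[? ?] ?; apply/andP; lra. Qed.

Lemma piece_open left l len z : l < z < l + len -> piece left l len z.
Proof. by rewrite pieceE; case: left => ?; apply/andP; lra. Qed.

Lemma piece_shift left l l' len z :
  piece left l len z -> piece left l' len (z + (l' - l)).
Proof. by rewrite !pieceE; case: left => /andP[? ?]; apply/andP; lra. Qed.

Lemma piece_disjoint left l len l' len' z :
  piece left l len z -> piece left l' len' z -> l + len <= l' -> False.
Proof. by rewrite !pieceE; case: left => /andP[? ?] /andP[? ?]; lra. Qed.

Lemma piece_unit left l len z :
  0 <= l -> l + len <= 1 -> piece left l len z -> unit_dom left z.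
Proof. by rewrite unit_domE pieceE; case: left => ? ? /andP[? ?]; apply/andP; lra. Qed.

Lemma unit_dom_bounds left z : unit_dom left z -> 0 <= z <= 1.
Proof. by rewrite unit_domE; case: left => /andP[? ?]; apply/andP; lra. Qed.

End Pieces.

Section IntervalExchange.
Variables (R : realType) (n : nat) (a : 'I_n -> R).
Hypothesis a_pos : forall i, 0 < a i.
Hypothesis a_sum : \sum_(i < n) a i = 1.

(* Left endpoint of the i-th interval when the intervals of lengths a are
   laid out in [0,1] in the order given by rho. *)
Definition start (rho : 'S_n) (i : 'I_n) : R :=
  \sum_(j < n | (rho j < rho i)%N) a j.

Definition inpiece (left : bool) (rho : 'S_n) (i : 'I_n) (z : R) : bool :=
  piece left (start rho i) (a i) z.

Definition exch (left : bool) (rho sigma : 'S_n) (x : R) : R :=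
  match [pick i | inpiece left rho i x] with
  | Some i => x - start rho i + start sigma i
  | None => x
  end.

Lemma start_ge0 rho i : 0 <= start rho i.
Proof. by apply: sumr_ge0 => j _; apply: ltW. Qed.

Lemma sum_extend (A B : pred 'I_n) i : {subset A <= B} -> ~~ A i -> B i ->
  \sum_(j | A j) a j + a i <= \sum_(j | B j) a j.
Proof.
move=> sAB nAi Bi; rewrite (bigD1 i Bi) /= [X in _ <= X]addrC lerD2r.
rewrite big_mkcond [X in _ <= X]big_mkcond /=; apply: ler_sum => j _.
case: ifP => Aj; last by case: ifP => _ //; apply: ltW.
have Bj : B j by apply: sAB.
by rewrite Bj /=; case: eqP => // eji; rewrite -eji Aj in nAi.
Qed.

Lemma start_top rho i : start rho i + a i <= 1.
Proof. by rewrite -a_sum; apply: sum_extend => //=; rewrite ltnn. Qed.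

Lemma start_before (rho : 'S_n) i j : (rho i < rho j)%N -> start rho i + a i <= start rho j.
Proof.
move=> hij; apply: sum_extend => [k /= hk||]; rewrite /= ?ltnn //.
exact: ltn_trans hk hij.
Qed.

Lemma inpiece_unit left rho i z : inpiece left rho i z -> unit_dom left z.
Proof. by apply: piece_unit; [apply: start_ge0 | apply: start_top]. Qed.

Lemma inpiece_uniq left rho i j z :
  inpiece left rho i z -> inpiece left rho j z -> i = j.
Proof.
move=> hi hj; case: (eqVneq i j) => // nij.
have : rho i != rho j by apply: contra nij => /eqP /perm_inj ->.
by rewrite neq_ltn => /orP[] /start_before lt;
  [case: (piece_disjoint hi hj lt) | case: (piece_disjoint hj hi lt)].
Qed.

(* The rho-layout covers the unit domain: walk through the intervals in the
   order rho, keeping track of the partial sums of their lengths. *)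
Lemma inpiece_exists left rho z : unit_dom left z -> exists i, inpiece left rho i z.
Proof.
move=> hz; apply/existsP; apply: contraT => /existsPn none.
pose S k := \sum_(j < n | (rho j < k)%N) a j.
have S_step k (hk : (k < n)%N) :
    let i := (rho^-1)%g (Ordinal hk) in S k.+1 = S k + a i /\ start rho i = S k.
  move=> i; have rhoi : rho i = Ordinal hk by rewrite /i permKV.
  split; last by rewrite /start /S rhoi.
  rewrite /S (bigD1 i) /=; last by rewrite rhoi.
  rewrite addrC; congr (_ + _); apply: eq_bigl => j.
  rewrite ltnS leq_eqVlt.
  have -> : (rho j == k :> nat) = (j == i).
    by rewrite -(inj_eq (@perm_inj _ rho)) rhoi.
  case: (eqVneq j i) => [->|] /=; last by rewrite andbT.
  by rewrite rhoi ltnn.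
have before_S k : (k <= n)%N -> before left (S k) z.
  elim: k => [_|k IH hk]; first by rewrite /S big_pred0 //; case/andP: hz.
  have [-> starti] := S_step k hk; have := none ((rho^-1)%g (Ordinal hk)).
  by rewrite /inpiece /piece starti (IH (ltnW hk)) /= negbK.
have Sn : S n = 0 + 1 by rewrite add0r /S -a_sum; apply: eq_bigl => j; rewrite ltn_ord.
by have := before_S n (leqnn n); rewrite Sn; case/andP: hz => _ /negbTE ->.
Qed.

Lemma exch_transl left rho sigma i z : inpiece left rho i z ->
  exch left rho sigma z = z + (start sigma i - start rho i).
Proof.
move=> hz; rewrite /exch; case: pickP => [j hj|/(_ i)]; last by rewrite hz.
by rewrite (inpiece_uniq hj hz); lra.
Qed.

Lemma exch_inpiece left rho sigma i z : inpiece left rho i z ->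
  inpiece left sigma i (exch left rho sigma z).
Proof. by move=> hz; rewrite (exch_transl _ hz); apply: piece_shift. Qed.

Lemma exch_unit left rho sigma z : unit_dom left z -> unit_dom left (exch left rho sigma z).
Proof.
move=> /(inpiece_exists rho) [i hi].
exact: inpiece_unit (exch_inpiece sigma hi).
Qed.

Lemma exchK left rho sigma z : unit_dom left z ->
  exch left sigma rho (exch left rho sigma z) = z.
Proof.
move=> /(inpiece_exists rho) [i hi].
by rewrite (exch_transl _ (exch_inpiece sigma hi)) (exch_transl _ hi); lra.
Qed.

Lemma iter_exch_unit left rho sigma m z : unit_dom left z ->
  unit_dom left (iter m (exch left rho sigma) z).
Proof. by move=> hz; elim: m => //= m IH; apply: exch_unit. Qed.

Lemma iter_exchK left rho sigma m z : unit_dom left z ->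
  iter m (exch left sigma rho) (iter m (exch left rho sigma) z) = z.
Proof.
elim: m z => // m IH z hz.
by rewrite iterSr iterS exchK ?IH // iter_exch_unit.
Qed.

Lemma exch_interior left rho sigma i p q r :
  inpiece left rho i p -> inpiece left rho i q -> p < r < q ->
  exch true rho sigma r = exch left rho sigma r.
Proof.
rewrite /inpiece !pieceE => hp hq hr.
have open b : inpiece b rho i r.
  by apply: piece_open; case: left hp hq => /andP[? ?] /andP[? ?]; apply/andP; lra.
by rewrite !(exch_transl _ (open _)).
Qed.

Definition aperiodic (f : R -> R) : Prop :=
  forall x, 0 <= x < 1 -> forall k, (0 < k)%N -> iter k f x <> x.

Lemma aperiodic_inverse rho sigma :
  aperiodic (exch true rho sigma) -> aperiodic (exch true sigma rho).
Proof.
move=> ap x hx k k0 per; apply: (ap x hx k k0).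
by rewrite -{1}per iter_exchK // unit_domE.
Qed.

Lemma exch_no_twins left rho sigma u v : aperiodic (exch true rho sigma) ->
  u <> v -> same_itin (exch left rho sigma) (inpiece left rho) u v -> False.
Proof.
move=> ap; wlog uv : u v / u < v.
  move=> wlog_lt neq hs; case: (ltgtP u v) => [lt|gt|//].
    exact: wlog_lt neq hs.
  exact: wlog_lt (nesym neq) (same_itin_sym hs).
move=> _ hs.
have convex i p q r := @piece_convex R left (start rho i) (a i) p q r.
have unit i z (hz : inpiece left rho i z) := unit_dom_bounds (inpiece_unit hz).
have [y [p [p0 per [j /andP[lo hi]]]]] :=
  same_itin_interior_periodic convex (@exch_transl left rho sigma) unit
    (@exch_interior left rho sigma) uv hs.
have [i /andP[hu hv]] := hs j j (leqnn j).
have := unit _ _ hu; have := unit _ _ hv => /andP[? ?] /andP[? ?].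
by apply: (ap y _ p p0 per); apply/andP; lra.
Qed.
End IntervalExchange.

Section Itineraries.
Variables (R : realType) (n : nat) (a : 'I_n -> R) (tau : 'S_n).
Hypothesis a_pos : forall i, 0 < a i.
Hypothesis a_sum : \sum_(i < n) a i = 1.

Definition src (fwd : bool) : 'S_n := if fwd then 1%g else tau.
Definition dst (fwd : bool) : 'S_n := if fwd then tau else 1%g.
Definition flow (left : bool) (fwd : bool) : R -> R := exch a left (src fwd) (dst fwd).

Definition orbit (left : bool) (k : int) (x : R) : R :=
  zpow (flow left true) (flow left false) k x.

Definition code (left : bool) (d : 'I_n) (x : R) (k : int) : 'I_n :=
  odflt d [pick i | inpiece a left 1 i (orbit left k x)].

Lemma lo_start : lo a = start a 1.
Proof. by apply: functional_extensionality => i; apply: eq_bigl => j; rewrite !perm1. Qed.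

Lemma J_inpiece i y : (lo a i <= y) && (y < hi a i) = inpiece a true 1 i y.
Proof. by rewrite /inpiece pieceE /hi lo_start. Qed.

Lemma Jd_inpiece i y : (lo a i < y) && (y <= hi a i) = inpiece a false 1 i y.
Proof. by rewrite /inpiece pieceE /hi lo_start. Qed.

Lemma Jt_inpiece i y : (lot a tau i <= y) && (y < hit a tau i) = inpiece a true tau i y.
Proof. by rewrite /inpiece pieceE. Qed.

Lemma Jdt_inpiece i y : (lot a tau i < y) && (y <= hit a tau i) = inpiece a false tau i y.
Proof. by rewrite /inpiece pieceE. Qed.

Lemma T_flow : T a tau = flow true true.
Proof.
apply: functional_extensionality => x.
by rewrite /T /flow /exch (eq_pick (J_inpiece^~ x)) lo_start.
Qed.

Lemma Tinv_flow : Tinv a tau = flow true false.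
Proof.
apply: functional_extensionality => x.
by rewrite /Tinv /flow /exch (eq_pick (Jt_inpiece^~ x)) lo_start.
Qed.

Lemma Td_flow : Td a tau = flow false true.
Proof.
apply: functional_extensionality => x.
by rewrite /Td /flow /exch (eq_pick (Jd_inpiece^~ x)) lo_start.
Qed.

Lemma Tdinv_flow : Tdinv a tau = flow false false.
Proof.
apply: functional_extensionality => x.
by rewrite /Tdinv /flow /exch (eq_pick (Jdt_inpiece^~ x)) lo_start.
Qed.

Lemma Tk_orbit : Tk a tau = orbit true.
Proof. by rewrite /Tk T_flow Tinv_flow. Qed.

Lemma itin_code d : itin a tau d = code true d.
Proof.
apply: functional_extensionality => x; apply: functional_extensionality => k.
by rewrite /itin /code Tk_orbit (eq_pick (J_inpiece^~ _)).
Qed.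

Lemma itind_code d : itind a tau d = code false d.
Proof.
apply: functional_extensionality => x; apply: functional_extensionality => k.
by rewrite /itind /code /Tdk Td_flow Tdinv_flow (eq_pick (Jd_inpiece^~ _)).
Qed.

Lemma iter_flow_unit left fwd m z : unit_dom left z -> unit_dom left (iter m (flow left fwd) z).
Proof. exact: (iter_exch_unit a_pos a_sum). Qed.

Lemma iter_flowK left fwd m z : unit_dom left z ->
  iter m (flow left (~~ fwd)) (iter m (flow left fwd) z) = z.
Proof. by case: fwd; apply: (iter_exchK a_pos a_sum). Qed.

Lemma orbit_unit left k x : unit_dom left x -> unit_dom left (orbit left k x).
Proof. by case: k => m; apply: (iter_exch_unit a_pos a_sum). Qed.

Lemma code_spec left d x k : unit_dom left x ->
  inpiece a left 1 (code left d x k) (orbit left k x).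
Proof.
move=> hx; rewrite /code; case: pickP => [//|none].
have [i hi] := inpiece_exists a_sum 1 (orbit_unit k hx).
by rewrite none in hi.
Qed.

(* Reading the itinerary in either time direction: the letter at time m
   (resp. -m-1) locates the m-th forward (resp. backward) iterate in the
   natural (resp. tau-) layout. *)
Definition at_dir (fwd : bool) (m : nat) : int := if fwd then Posz m else Negz m.

Lemma code_dir left fwd d x m : unit_dom left x ->
  inpiece a left (src fwd) (code left d x (at_dir fwd m)) (iter m (flow left fwd) x).
Proof.
move=> hx; case: fwd; first exact: code_spec.
have := code_spec d (Negz m) hx; rewrite /orbit /= => /(exch_inpiece a_pos tau).
by rewrite (exchK a_pos a_sum) // (iter_exch_unit a_pos a_sum).
Qed.

Definition asympt (fwd : bool) (al be : int -> 'I_n) : Prop :=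
  exists N : nat, forall m, (N <= m)%N -> al (at_dir fwd m) = be (at_dir fwd m).

Lemma pos_asympt_dir al be : pos_asympt al be -> asympt true al be.
Proof. by move=> [N hN]; exists N => m hm; apply: hN; rewrite lez_nat. Qed.

Lemma neg_asympt_dir al be : neg_asympt al be -> asympt false al be.
Proof.
move=> [N hN]; exists N => m hm; apply: hN.
by rewrite /= NegzE lerN2 lez_nat; apply: leqW.
Qed.

Hypothesis aper : no_periodic a tau.

Lemma flow_aperiodic fwd : aperiodic (flow true fwd).
Proof.
have fwd_aper : aperiodic (flow true true) by have := aper; rewrite /no_periodic T_flow.
by case: fwd => //; apply: (aperiodic_inverse a_pos a_sum).
Qed.

Lemma code_not_asympt left fwd d x y : unit_dom left x -> unit_dom left y ->
  x <> y -> ~ asympt fwd (code left d x) (code left d y).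
Proof.
move=> hx hy xy [N hN].
apply: (exch_no_twins a_pos a_sum (@flow_aperiodic fwd) (left := left)
          (u := iter N (flow left fwd) x) (v := iter N (flow left fwd) y)).
  move=> e; apply: xy.
  by rewrite -(iter_flowK fwd N hx) -(iter_flowK fwd N hy) e.
move=> K m _; exists (code left d x (at_dir fwd (m + N))).
rewrite -!iterD (code_dir _ _ _ hx) hN ?leq_addl //.
exact: code_dir.
Qed.

Lemma code_injective left d x y : unit_dom left x -> unit_dom left y ->
  code left d x = code left d y -> x = y.
Proof.
move=> hx hy e; have [//|/eqP xy] := eqVneq x y.
case: (code_not_asympt (fwd := true) (d := d) hx hy xy).
by exists 0%N => m _; rewrite e.
Qed.

Lemma start_inpiece rho i : inpiece a true rho i (start a rho i).
Proof. by rewrite /inpiece pieceE lexx ltrDl a_pos. Qed.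

Lemma flow_start i : flow true true (start a 1 i) = start a tau i.
Proof. by rewrite /flow (exch_transl a_pos _ (start_inpiece 1 i)); lra. Qed.

(* The orbit of the discontinuities b_1, ..., b_(n-1) of T, i.e. the set
   D_infty without its points 0 and 1. *)
Definition singular (z : R) : Prop :=
  exists (k : int) (i : 'I_n), (0 < i)%N /\ z = orbit true k (start a 1 i).

Lemma singular_flow fwd z : singular z -> singular (flow true fwd z).
Proof.
move=> [k [i [i0 ->]]].
have hy : unit_dom true (start a 1 i) := inpiece_unit a_pos a_sum (start_inpiece 1 i).
have unit m := iter_flow_unit (~~ fwd) m hy.
case: fwd unit => unit; [case: k => [m|[|m]] | case: k => [[|m]|m]].
- by exists (Posz m.+1), i.
- by exists (Posz 0), i; split=> //; rewrite /orbit /flow /= (exchK a_pos a_sum).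
- by exists (Negz m), i; split=> //; rewrite /orbit /flow /= (exchK a_pos a_sum) // (unit m.+1).
- by exists (Negz 0), i.
- by exists (Posz m), i; split=> //; rewrite /orbit /flow /= (exchK a_pos a_sum) // (unit m).
- by exists (Negz m.+1), i.
Qed.

(* All left endpoints of both layouts are singular; for b_0 = 0 this uses
   aperiodicity (0 is the image of a singular point unless it is fixed). *)
Lemma singular_start fwd i : singular (start a (src fwd) i).
Proof.
have start1 j : singular (start a 1 j).
  case: (posnP j) => [j0|jpos]; last by exists 0, j.
  have startj : start a 1 j = 0 by rewrite /start big_pred0 // => k; rewrite !perm1 j0 ltn0.
  pose j' := (tau^-1)%g j.
  have start' : start a tau j' = 0
    by rewrite /start big_pred0 // => k; rewrite /j' permKV j0 ltn0.
  case: (posnP j') => [j'0|j'pos].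
    have jj' : j' = j by apply/eqP; rewrite -val_eqE /= j'0 j0.
    have := @flow_aperiodic true 0 (ltac:(lra)) 1%N erefl.
    by rewrite /= -startj -{1}jj' flow_start start' startj.
  have := singular_flow true (ex_intro _ 0 (ex_intro _ j' (conj j'pos erefl))).
  by rewrite /orbit /= flow_start start' -startj.
by case: fwd; [apply: start1 | rewrite /= -flow_start; apply: singular_flow].
Qed.

Definition good (z : R) : Prop := unit_dom true z /\ ~ singular z.

Lemma good_iter fwd m z : good z -> good (iter m (flow true fwd) z).
Proof.
elim: m => // m IH /IH [hz nz]; split; first exact: (iter_flow_unit fwd 1).
move=> /(singular_flow (~~ fwd)); have /= -> := iter_flowK fwd 1 hz.
exact: nz.
Qed.

Lemma good_interior fwd z : good z -> exists i e, 0 < e /\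
  forall r, z - e < r < z + e -> inpiece a true (src fwd) i r.
Proof.
move=> [hz nz]; have [i hi] := inpiece_exists a_sum (src fwd) hz.
have zs : z != start a (src fwd) i.
  by apply/eqP => zs; apply: nz; rewrite zs; apply: singular_start.
move: hi; rewrite /inpiece pieceE => /andP[lo hi].
have lo' : start a (src fwd) i < z by rewrite lt_neqAle eq_sym zs.
set e := Num.min (z - start a (src fwd) i) (start a (src fwd) i + a i - z).
have [e1 e2] : e <= z - start a (src fwd) i /\ e <= start a (src fwd) i + a i - z.
  by rewrite !ge_min !lexx orbT.
exists i, e; split=> [|r hr]; first by rewrite lt_min; apply/andP; lra.
by apply: piece_open; apply/andP; lra.
Qed.

Lemma flow_local fwd u : good u -> forall m, exists e, 0 < e /\
  forall w, u - e < w < u + e ->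
    iter m (flow true fwd) w = iter m (flow true fwd) u + (w - u).
Proof.
move=> gu; apply: (interior_orbit_transl (exch_transl a_pos (dst fwd))) => m.
exact: good_interior (good_iter fwd m gu).
Qed.

Lemma code_locally_constant d x k : good x -> exists e, 0 < e /\
  forall z, unit_dom true z -> x - e < z < x + e -> code true d z k = code true d x k.
Proof.
move=> gx; have [fwd [m ->]] : exists fwd m, k = at_dir fwd m.
  by case: k => m; [exists true, m | exists false, m].
have [e1 [e10 transl]] := flow_local fwd gx m.
have [i [e2 [e20 interior]]] := good_interior fwd (good_iter fwd m gx).
have [m1 m2] : Num.min e1 e2 <= e1 /\ Num.min e1 e2 <= e2 by rewrite !ge_min !lexx orbT.
exists (Num.min e1 e2); split=> [|z hz hzx]; first by rewrite lt_min e10 e20.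
have inz : inpiece a true (src fwd) i (iter m (flow true fwd) z).
  by rewrite transl; [apply: interior | ]; lra.
have inx : inpiece a true (src fwd) i (iter m (flow true fwd) x).
  by apply: interior; lra.
by rewrite (inpiece_uniq a_pos (code_dir _ _ _ hz) inz)
  (inpiece_uniq a_pos (code_dir _ _ _ gx.1) inx).
Qed.

Lemma tail_separation fwd d x N e : good x -> 0 < e -> exists K,
  forall z, unit_dom true z ->
  (forall m, (N <= m <= N + K)%N ->
     code true d z (at_dir fwd m) = code true d x (at_dir fwd m)) ->
  x - e < z < x + e.
Proof.
move=> gx e0; set F := flow true fwd; set u := iter N F x.
have [e1 [e10 back]] := flow_local (~~ fwd) (good_iter fwd N gx) N.
have back_u : iter N (flow true (~~ fwd)) u = x := iter_flowK fwd N gx.1.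
have [m1 m2] : Num.min e1 e <= e1 /\ Num.min e1 e <= e by rewrite !ge_min !lexx orbT.
have emin : 0 < Num.min e1 e by rewrite lt_min e10 e0.
have lonely w : w <> u -> same_itin F (inpiece a true (src fwd)) w u -> False.
  exact: (@exch_no_twins R n a a_pos a_sum true (src fwd) (dst fwd) w u
            (@flow_aperiodic fwd)).
have convex i p q r := @piece_convex R true (start a (src fwd) i) (a i) p q r.
have [K shrink] := same_code_shrink convex
  (exch_transl a_pos (dst fwd)) emin lonely.
exists K => z hz agree; set w := iter N F z.
have /shrink near_u : same_code F (inpiece a true (src fwd)) K w u.
  move=> m hm; exists (code true d x (at_dir fwd (m + N))).
  rewrite /w /u -!iterD (code_dir _ _ _ gx.1) -agree ?code_dir //.
  by rewrite leq_addl /= addnC leq_add2l.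
have zG : iter N (flow true (~~ fwd)) w = z := iter_flowK fwd N hz.
have near_w : u - e1 < w < u + e1 by lra.
have zw : z = x + (w - u) by rewrite -zG (back w near_w) back_u.
lra.
Qed.

Lemma Rgood_good x : Rgood a tau x -> good x.
Proof.
move=> [/andP[x0 x1] notD]; split.
  rewrite unit_domE x0 lt_neqAle x1 andbT; apply/eqP => x1'.
  by apply: notD; right; left.
by move=> sx; apply: notD; right; right; rewrite Tk_orbit lo_start.
Qed.

Lemma absz_at_dir fwd m : (absz (at_dir fwd m) <= m.+1)%N.
Proof. by case: fwd => /=. Qed.

(* Otherwise the other point, approximated by itineraries of points z, would
   force z to approach the coding point x (tail separation), while a letter
   where the two sequences differ is locally constant around x. *)
Lemma X0_not_asympt fwd d al be : X a tau d be -> X0 a tau d al -> al <> be ->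
  ~ asympt fwd al be.
Proof.
rewrite /X /X0 itin_code => approx [x [rx ->]] neq [N tails].
have gx := Rgood_good rx.
have [k0 differ] : exists k0, code true d x k0 <> be k0.
  apply: NNPP => /(not_ex_not_all _ _) same.
  by apply: neq; apply: functional_extensionality.
have [e [e0 locally]] := code_locally_constant d k0 gx.
have [K separate] := tail_separation fwd d N gx e0.
have [z [rz agree]] := approx (maxn (absz k0) (N + K).+1).
have gz := Rgood_good rz.
apply: differ; rewrite agree ?leq_maxl //; symmetry.
apply: locally gz.1 (separate z gz.1 _) => m /andP[Nm mK].
rewrite -agree ?tails //; apply: leq_trans (absz_at_dir fwd m) _.
by rewrite leq_max ltnS mK orbT.
Qed.
End Itineraries.

Theorem theorem4p4 (R : realType) (n : nat) (hn : (2 <= n)%N)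
  (a : 'I_n -> R) (tau : 'S_n)
  (ha : forall i, 0 < a i) (hsum : \sum_(i < n) a i = 1)
  (hnp : no_periodic a tau) :
  let d : 'I_n := Ordinal (ltnW hn) in
  (forall x y : R, 0 <= x < 1 -> 0 <= y < 1 -> x <> y ->
     ~ pos_asympt (itin a tau d x) (itin a tau d y) /\
     ~ neg_asympt (itin a tau d x) (itin a tau d y)) /\
  (forall x y : R, 0 < x <= 1 -> 0 < y <= 1 -> x <> y ->
     ~ pos_asympt (itind a tau d x) (itind a tau d y) /\
     ~ neg_asympt (itind a tau d x) (itind a tau d y)) /\
  (forall al be : int -> 'I_n, X a tau d al -> X a tau d be ->
     X0 a tau d al -> al <> be ->
     ~ pos_asympt al be /\ ~ neg_asympt al be) /\
  (forall x y : R, 0 <= x < 1 -> 0 <= y < 1 ->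
     itin a tau d x = itin a tau d y -> x = y) /\
  (forall x y : R, 0 < x <= 1 -> 0 < y <= 1 ->
     itind a tau d x = itind a tau d y -> x = y).
Proof.
move=> d; rewrite itin_code itind_code.
have not_asympt left x y : unit_dom left x -> unit_dom left y -> x <> y ->
    ~ pos_asympt (code a tau left d x) (code a tau left d y) /\
    ~ neg_asympt (code a tau left d x) (code a tau left d y).
  by move=> hx hy xy; split=> [/pos_asympt_dir|/neg_asympt_dir];
    apply: (code_not_asympt ha hsum hnp hx hy xy).
split; [|split; [|split; [|split]]].
- by move=> x y hx hy; apply: not_asympt; rewrite unit_domE.
- by move=> x y hx hy; apply: not_asympt; rewrite unit_domE.
- by move=> al be _ hbe hal neq; split=> [/pos_asympt_dir|/neg_asympt_dir];
    apply: (X0_not_asympt ha hsum hnp hbe hal neq).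
- by move=> x y hx hy; apply: (code_injective ha hsum hnp); rewrite unit_domE.
- by move=> x y hx hy; apply: (code_injective ha hsum hnp); rewrite unit_domE.
Qed.
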